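(* If there exists an $(N,NK,M,R)$ $\mathcal D_{(K,K,\dots,K)}$-non-private scheme, then there exists an $(N,K,M,R)$-private scheme.
   Context: Files $W_0,\dots,W_{N-1}$ independent, each uniform on $[2^F]=\{0,\dots,2^F-1\}$, $\bar W=(W_0,\dots,W_{N-1})$; $[n]=\{0,\dots,n-1\}$. Non-private scheme for $N$ files and $L$ users with memory $M$ and rate $R$: cache encoders $C_j:[2^F]^N\to[2^{MF}]$, transmission encoder $E:[2^F]^N\times[N]^L\to[2^{RF}]$ (the demand vector is also transmitted), decoders $G_j$ with $W_{d_j}=G_j(\bar d,E(\bar W,\bar d),C_j(\bar W))$. For $\mathcal D\subseteq[N]^L$, a $\mathcal D$-non-private scheme is one satisfying this decoding condition for all $\bar W$ and all $\bar d\in\mathcal D$. For a demand vector $\bar d\in[N]^L$, its type is $(t_0,\dots,t_{N-1})$ where $t_i$ is the number of users requesting file $i$; $\mathcal D_{\bar t}$ denotes the set of demand vectors of type $\bar t$. Here $L=NK$ and $\mathcal D_{(K,\dots,K)}$ is the set of demand vectors in which every file is requested by exactly $K$ users. Private scheme $(N,K,M,R)$: $K$ users with independent uniform demands $D_k\in[N]$, $\bar D=(D_0,\dots,D_{K-1})$, $\tilde D_k$ = all demands except $D_k$; user $k$ shares a key $S_k$ (finite alphabet) with the server, server private randomness $P$ (finite alphabet), all of $P$, $S_k$, $D_k$, $W_i$ mutually independent; cache $Z_k=(C_k(S_k,P,\bar W),S_k)$ with $C_k$ valued in $[2^{MF}]$; broadcast $X=(E(\bar W,\bar D,P,\bar S),J(\bar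 D,P,\bar S))$ with $E$ valued in $[2^{RF}]$ and $J$ valued in a finite set whose $\log_2$-size is negligible compared to $F$; user $k$ recovers $W_{D_k}$ exactly from $(D_k,S_k,X,Z_k)$; and $I(\tilde D_k;Z_k,X,D_k)=0$ for all $k$. *)

From HB Require Import structures.
From mathcomp Require Import all_boot all_order all_algebra.
From mathcomp Require Import reals exp.
Set Implicit Arguments. Unset Strict Implicit. Unset Printing Implicit Defensive.
Import Order.TTheory GRing.Theory Num.Theory.
Local Open Scope ring_scope.

Definition files (N F : nat) := {ffun 'I_N -> 'I_(2 ^ F)}.
Definition demands (N L : nat) := {ffun 'I_L -> 'I_N}.

(* n \in [2^(r F)] = {0, ..., 2^(rF) - 1}, i.e. n + 1 <= 2^(r F). *)
Definition fits {R : realType} (r : R) (F n : nat) : bool :=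
  (n.+1)%:R <= (2 : R) `^ (r * F%:R).

Definition in_Dtype (N L : nat) (t : 'I_N -> nat) (d : demands N L) : bool :=
  [forall i : 'I_N, #|[set j : 'I_L | d j == i]| == t i].

Definition nonprivate_scheme {R : realType} (N L F : nat) (M Rt : R)
    (D : pred (demands N L)) : Prop :=
  exists (C : 'I_L -> files N F -> nat)
         (E : files N F -> demands N L -> nat)
         (G : 'I_L -> demands N L -> nat -> nat -> 'I_(2 ^ F)),
    (forall j w, fits M F (C j w)) /\
    (forall w d, fits Rt F (E w d)) /\
    (forall w d, D d -> forall j, G j d (E w d) (C j w) = w (d j)).

Section Prob.
Variables (R : realType) (Omega : finType) (pr : Omega -> R).

Definition is_pmf (T : finType) (p : T -> R) : Prop :=
  (forall t, 0 <= p t) /\ \sum_(t : T) p t = 1.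

Definition Pr (A : pred Omega) : R := \sum_(o | A o) pr o.

Definition log2 (x : R) : R := ln x / ln 2.

Definition mutual_info (T1 T2 : eqType) (X : Omega -> T1) (Y : Omega -> T2) : R :=
  \sum_(o : Omega) pr o *
    log2 (Pr [pred o' | (X o' == X o) && (Y o' == Y o)] /
          (Pr [pred o' | X o' == X o] * Pr [pred o' | Y o' == Y o])).
End Prob.

(* Sample space of a private scheme: (W, D, P, S). *)
Definition omega (N K F : nat) (TP TS : finType) :=
  (files N F * demands N K * TP * {ffun 'I_K -> TS})%type.

(* Joint law: files uniform, demands uniform, P ~ pP, S_k ~ pS k, all
   mutually independent. *)
Definition joint {R : realType} (N K F : nat) (TP TS : finType)
    (pP : TP -> R) (pS : 'I_K -> TS -> R) (o : omega N K F TP TS) : R :=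
  ((2 ^ F) ^ N)%:R^-1 * ((N ^ K)%:R)^-1 * pP o.1.2 *
  \prod_(k < K) pS k (o.2 k).

Definition other_demands (N K : nat) (k : 'I_K) (d : demands N K) : seq 'I_N :=
  [seq d j | j <- enum 'I_K & j != k].

(* (N, K, M, R)-private scheme with file size F whose auxiliary transmission
   J takes values in a finite set of size at most cJ. *)
Definition private_scheme {R : realType} (N K F : nat) (M Rt : R) (cJ : nat) : Prop :=
  exists (TP TS TJ : finType) (pP : TP -> R) (pS : 'I_K -> TS -> R)
         (C : 'I_K -> TS -> TP -> files N F -> nat)
         (E : files N F -> demands N K -> TP -> {ffun 'I_K -> TS} -> nat)
         (J : demands N K -> TP -> {ffun 'I_K -> TS} -> TJ)
         (G : 'I_K -> 'I_N -> TS -> nat -> TJ -> nat -> 'I_(2 ^ F)),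
    is_pmf pP /\ (forall k, is_pmf (pS k)) /\ (#|TJ| <= cJ)%N /\
    (forall k s p w, fits M F (C k s p w)) /\
    (forall w d p s, fits Rt F (E w d p s)) /\
    (* exact recovery (with probability one) of W_{D_k} from (D_k, S_k, X, Z_k) *)
    (forall o : omega N K F TP TS, 0 < joint pP pS o ->
       let: (w, d, p, s) := o in
       forall k, G k (d k) (s k) (E w d p s) (J d p s) (C k (s k) p w) = w (d k)) /\
    (* privacy: I(~D_k ; Z_k, X, D_k) = 0 *)
    (forall k : 'I_K,
       mutual_info (joint pP pS)
         (fun o : omega N K F TP TS => other_demands k o.1.1.2)
         (fun o : omega N K F TP TS =>
            let: (w, d, p, s) := o in
            ((C k (s k) p w, s k), (E w d p s, J d p s), d k)) = 0).

From mathcomp Require Import all_boot all_order all_algebra.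
From mathcomp Require Import reals exp ring.

(* Every real user k draws a uniform key S_k in Z_N and plays the virtual user
   (S_k, k) of the non-private scheme with N K users, in which virtual user
   (i, l) requests file i + T_l with T := D - S.  Each file is then requested by
   exactly K virtual users, and virtual user (S_k, k) requests D_k.  Besides the
   non-private transmission, the server broadcasts the virtual demand vector, a
   function of T taking at most N^(N K) values whatever F is.  As T is uniform
   and independent of D, and everything user k sees is a function of
   (W, D_k, T), user k learns nothing about the other demands. *)

Set Implicit Arguments.
Unset Strict Implicit.
Unset Printing Implicit Defensive.

Import GRing.Theory Num.Theory.
Local Open Scope ring_scope.

Definition unif_pmf (R : realType) (T : finType) : T -> R := fun _ => #|T|%:R^-1.
Arguments unif_pmf {R} T.

Lemma unif_pmfP (R : realType) (T : finType) :
  (0 < #|T|)%N -> is_pmf (unif_pmf (R := R) T).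
Proof.
move=> T_gt0; split=> [t|]; first by rewrite invr_ge0 ler0n.
by rewrite sumr_const -[LHS]mulr_natl mulfV // pnatr_eq0 -lt0n.
Qed.

Section MutualInformation.
Variables (R : realType) (Om : finType) (pr : Om -> R).

Lemma mutual_info_indep_eq0 (T1 T2 : eqType) (X : Om -> T1) (Y : Om -> T2) :
  (forall o, Pr pr [pred o' | (X o' == X o) && (Y o' == Y o)] =
             Pr pr [pred o' | X o' == X o] * Pr pr [pred o' | Y o' == Y o]) ->
  mutual_info pr X Y = 0.
Proof.
move=> indep; rewrite /mutual_info big1 // => o _; rewrite indep /log2.
set q := Pr pr _ * Pr pr _; have [->|q_neq0] := eqVneq q 0.
  (* [ln 0 = 0], so null events contribute nothing *)
  by rewrite mul0r ln0 // mul0r mulr0.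
by rewrite divff // ln1 mul0r mulr0.
Qed.

Hypothesis pr_unif : forall o, pr o = #|{: Om}|%:R^-1.

Lemma Pr_unif_bij (A : finType) (psi : A -> Om) (P : pred Om) :
  bijective psi -> Pr pr P = #|[set a | P (psi a)]|%:R / #|A|%:R.
Proof.
move=> psi_bij; rewrite /Pr (reindex psi) /=; last exact: onW_bij.
under eq_bigr do rewrite pr_unif.
rewrite (eq_bigl [in [set a | P (psi a)]]); last by move=> a; rewrite inE.
by rewrite sumr_const (bij_eq_card psi_bij) mulr_natl.
Qed.

Lemma mutual_info_unif_prod_eq0 (A B : finType) (T1 T2 : eqType)
    (X : Om -> T1) (Y : Om -> T2) (psi : A * B -> Om) (f : A -> T1) (g : B -> T2) :
  bijective psi -> (forall ab, X (psi ab) = f ab.1) ->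
  (forall ab, Y (psi ab) = g ab.2) -> mutual_info pr X Y = 0.
Proof.
move=> psi_bij psiX psiY; apply: mutual_info_indep_eq0 => o.
have [phi _ _] := psi_bij; have [a b] := phi o.
have cardA_neq0 : #|A|%:R != 0 :> R by rewrite pnatr_eq0 -lt0n; apply/card_gt0P; exists a.
have cardB_neq0 : #|B|%:R != 0 :> R by rewrite pnatr_eq0 -lt0n; apply/card_gt0P; exists b.
rewrite !(Pr_unif_bij _ psi_bij).
set SA := [set a | f a == X o]; set SB := [set b | g b == Y o].
have -> : [set ab | [pred o' | (X o' == X o) && (Y o' == Y o)] (psi ab)] = setX SA SB.
  by apply/setP => ab; rewrite !inE /= psiX psiY.
have -> : [set ab | [pred o' | X o' == X o] (psi ab)] = setX SA [set: B].
  by apply/setP => ab; rewrite !inE /= psiX andbT.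
have -> : [set ab | [pred o' | Y o' == Y o] (psi ab)] = setX [set: A] SB.
  by apply/setP => ab; rewrite !inE /= psiY.
rewrite !cardsX !cardsT card_prod !natrM; field.
by rewrite cardA_neq0 cardB_neq0.
Qed.

End MutualInformation.

Section VirtualDemands.
Variables (n K : nat).
Local Notation N := n.+1.

(* Virtual user (i, l) is [mxvec_index i l]. *)
Definition virtual_demands (t : demands N K) : demands N (N * K) :=
  [ffun j => mxvec (\matrix_(i, l) (i + t l)) 0 j].

Lemma virtual_demandsE t i l : virtual_demands t (mxvec_index i l) = i + t l.
Proof. by rewrite ffunE mxvecE mxE. Qed.

Lemma mxvec_index_inj : injective (uncurry (@mxvec_index N K)).
Proof. exact/bij_inj/onT_bij/curry_mxvec_bij. Qed.

Lemma virtual_demands_type t : in_Dtype (fun _ => K) (virtual_demands t).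
Proof.
apply/forallP => i; apply/eqP.
have -> : [set j | virtual_demands t j == i] = [set mxvec_index (i - t l) l | l : 'I_K].
  apply/setP => j; case/mxvec_indexP: j => i' l; rewrite inE virtual_demandsE.
  apply/eqP/imsetP => [<-|[l' _ /(@mxvec_index_inj (_, _) (_, _)) [-> ->]]].
    by exists l; rewrite ?addrK.
  by rewrite subrK.
rewrite card_imset ?card_ord // => l1 l2.
by move/(@mxvec_index_inj (_, _) (_, _)) => [].
Qed.

End VirtualDemands.

Definition ffun_set (aT : finType) (rT : Type) (f : {ffun aT -> rT}) (x : aT) (y : rT) :
  {ffun aT -> rT} := [ffun z => if z == x then y else f z].

Section FfunSet.
Variables (aT : finType) (rT : Type) (f : {ffun aT -> rT}) (x : aT).

Lemma ffun_set_eq y : ffun_set f x y x = y.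
Proof. by rewrite ffunE eqxx. Qed.

Lemma ffun_set_neq y z : z != x -> ffun_set f x y z = f z.
Proof. by rewrite ffunE => /negbTE ->. Qed.

Lemma ffun_set_id : ffun_set f x (f x) = f.
Proof. by apply/ffunP => z; rewrite ffunE; case: eqP => [->|]. Qed.

Lemma ffun_set_set y y' : ffun_set (ffun_set f x y) x y' = ffun_set f x y'.
Proof. by apply/ffunP => z; rewrite !ffunE; case: eqP. Qed.

End FfunSet.

Section Privacy.
Variables (R : realType) (n K F : nat) (k : 'I_K).
Local Notation N := n.+1.
Local Notation Om := (omega N K F unit 'I_N).
Local Notation pr := (joint (R := R) (unif_pmf unit) (fun _ => unif_pmf 'I_N)).

Lemma joint_unif (o : Om) : pr o = #|{: Om}|%:R^-1.
Proof.
rewrite /joint /unif_pmf prodr_const !card_prod !card_ffun !card_ord card_unit.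
by rewrite invr1 mulr1 exprVn -natrX -!invfM -!natrM muln1.
Qed.

Lemma other_demands_set (d : demands N K) e :
  other_demands k (ffun_set d k e) = other_demands k d.
Proof.
apply/eq_in_map => j; rewrite mem_filter => /andP[j_neq_k _].
exact: ffun_set_neq.
Qed.

Lemma mutual_info_shifted_view_eq0 (T : eqType) (Y : Om -> T)
    (f : files N F * 'I_N * demands N K -> T) :
  (forall w d s, Y (w, d, tt, s) = f (w, d k, d - s)) ->
  mutual_info pr (fun o : Om => other_demands k o.1.1.2) Y = 0.
Proof.
move=> Y_view.
pose A := {a : demands N K | a k == 0}.
pose psi (ab : A * (files N F * 'I_N * demands N K)) : Om :=
  let: (a, (w, e, t)) := ab in (w, ffun_set (val a) k e, tt, ffun_set (val a) k e - t).
pose phi (o : Om) : A * (files N F * 'I_N * demands N K) :=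
  let: (w, d, _, s) := o in
  (exist _ (ffun_set d k 0) (introT eqP (ffun_set_eq d k 0)), (w, d k, d - s)).
apply: (@mutual_info_unif_prod_eq0 _ _ _ joint_unif _ _ _ _ _ _ psi
          (fun a => other_demands k (val a)) f).
- exists phi.
  + move=> [[a a_k] [[w e] t]] /=; congr (_, (_, _, _)).
    * by apply: val_inj; rewrite /= ffun_set_set -(eqP a_k) ffun_set_id.
    * exact: ffun_set_eq.
    * exact: subKr.
  + by move=> [[[w d] []] s] /=; rewrite ffun_set_set ffun_set_id subKr.
- by move=> [[a _] [[w e] t]] /=; rewrite other_demands_set.
- by move=> [[a _] [[w e] t]] /=; rewrite Y_view ffun_set_eq subKr.
Qed.

End Privacy.

Section PrivateFromNonprivate.
Variables (R : realType) (n K F : nat) (M Rt : R).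
Local Notation N := n.+1.
Variables (C : 'I_(N * K) -> files N F -> nat) (E : files N F -> demands N (N * K) -> nat)
  (G : 'I_(N * K) -> demands N (N * K) -> nat -> nat -> 'I_(2 ^ F)).
Hypotheses (C_fits : forall j w, fits M F (C j w)) (E_fits : forall w d, fits Rt F (E w d))
  (G_decodes : forall w d, in_Dtype (fun _ => K) d ->
                 forall j, G j d (E w d) (C j w) = w (d j)).

Lemma shifted_decoding w (d s : demands N K) k :
  let t := virtual_demands (d - s) in
  G (mxvec_index (s k) k) t (E w t) (C (mxvec_index (s k) k) w) = w (d k).
Proof. by rewrite /= G_decodes ?virtual_demands_type // virtual_demandsE !ffunE subrKC. Qed.

Lemma private_scheme_of_nonprivate : private_scheme N K F M Rt (N ^ (N * K)).
Proof.
exists unit, 'I_N, (demands N (N * K)), (unif_pmf unit), (fun _ => unif_pmf 'I_N),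
  (fun k s _ w => C (mxvec_index s k) w),
  (fun w d _ s => E w (virtual_demands (d - s))),
  (fun d _ s => virtual_demands (d - s)),
  (fun k _ s x t z => G (mxvec_index s k) t x z).
split; [|split; [|split; [|split; [|split; [|split]]]]].
- by apply: unif_pmfP; rewrite card_unit.
- by move=> k; apply: unif_pmfP; rewrite card_ord.
- by rewrite card_ffun !card_ord.
- by move=> k s _ w; apply: C_fits.
- by move=> w d _ s; apply: E_fits.
- by move=> [[[w d] _] s] _ k; apply: shifted_decoding.
- move=> k; apply: (@mutual_info_shifted_view_eq0 _ _ _ _ k _ _
    (fun '(w, e, t) => ((C (mxvec_index (e - t k) k) w, e - t k),
                        (E w (virtual_demands t), virtual_demands t), e))).
  by move=> w d s; rewrite /= !ffunE subKr.
Qed.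

End PrivateFromNonprivate.

Theorem corollary1 (R : realType) (N K : nat) (hN : (0 < N)%N) (hK : (0 < K)%N) :
  exists cJ : nat,
  forall (F : nat) (M Rt : R),
    nonprivate_scheme (L := N * K) F M Rt (in_Dtype (fun _ : 'I_N => K)) ->
    private_scheme N K F M Rt cJ.
Proof.
case: N hN => [//|n] _; exists (n.+1 ^ (n.+1 * K))%N.
move=> F M Rt [C [E [G [C_fits [E_fits G_decodes]]]]].
exact: (private_scheme_of_nonprivate C_fits E_fits G_decodes).
Qed.
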